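(* Let $\mathcal L$ be an expansion of the language of ordered groups and let $G$ be an $\mathcal L$-structure whose reduct is a densely ordered abelian group. If $G$ satisfies the scheme DCI, then the group $G$ is divisible.
   Context: For an $\mathcal L$-formula $\varphi(v,\bar w)$, $\mathrm{DCI}_\varphi$ is the sentence $\forall\bar w\Big(\big(\exists s\,\forall v<s\,\varphi(v,\bar w)\ \wedge\ \forall v\big(\forall s<v\,\varphi(s,\bar w)\to\exists u>v\,\forall s<u\,\varphi(s,\bar w)\big)\big)\to\forall v\,\varphi(v,\bar w)\Big)$, and DCI is the scheme $\{\mathrm{DCI}_\varphi:\varphi(v,\bar w)\text{ an }\mathcal L\text{-formula}\}$. Divisible means: for every $g\in G$ and integer $n\ge1$ there is $h\in G$ with $nh=g$. *)

From mathcomp Require Import all_boot.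
Set Implicit Arguments. Unset Strict Implicit. Unset Printing Implicit Defensive.

Record DOAG := {
  car :> Type;
  gzero : car;
  gadd : car -> car -> car;
  gopp : car -> car;
  glt : car -> car -> Prop;
  gaddA : forall x y z, gadd x (gadd y z) = gadd (gadd x y) z;
  gaddC : forall x y, gadd x y = gadd y x;
  gadd0 : forall x, gadd gzero x = x;
  gaddN : forall x, gadd (gopp x) x = gzero;
  glt_irr : forall x, ~ glt x x;
  glt_trans : forall x y z, glt x y -> glt y z -> glt x z;
  glt_total : forall x y, glt x y \/ x = y \/ glt y x;
  glt_add : forall x y z, glt x y -> glt (gadd x z) (gadd y z);
  glt_dense : forall x y, glt x y -> exists z, glt x z /\ glt z y
}.

Fixpoint gnmul (G : DOAG) (n : nat) (g : G) : G :=
  match n with 0 => gzero G | S k => gadd g (gnmul k g) end.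

Definition divisible (G : DOAG) : Prop :=
  forall (g : G) (n : nat), (1 <= n)%coq_nat -> exists h : G, gnmul n h = g.

(* Extra symbols of an expansion L of the language {0,+,-,<} of ordered groups
   (constants are 0-ary function symbols). *)
Record signature := {
  fsym : Type; farity : fsym -> nat;
  rsym : Type; rarity : rsym -> nat
}.

Record Lstructure (L : signature) := {
  grp :> DOAG;
  fint : forall f : fsym L, ('I_(farity f) -> grp) -> grp;
  rint : forall r : rsym L, ('I_(rarity r) -> grp) -> Prop
}.

Inductive term (L : signature) : Type :=
| tvar : nat -> term L
| tzero : term L
| tadd : term L -> term L -> term L
| topp : term L -> term L
| tapp : forall f : fsym L, ('I_(farity f) -> term L) -> term L.

Inductive formula (L : signature) : Type :=
| fbot : formula L
| feq : term L -> term L -> formula L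
| flt : term L -> term L -> formula L
| frel : forall r : rsym L, ('I_(rarity r) -> term L) -> formula L
| fnot : formula L -> formula L
| fand : formula L -> formula L -> formula L
| f_or : formula L -> formula L -> formula L
| fimp : formula L -> formula L -> formula L
| fall : nat -> formula L -> formula L
| fex : nat -> formula L -> formula L.

Definition upd (T : Type) (e : nat -> T) (n : nat) (x : T) : nat -> T :=
  fun m => if Nat.eqb m n then x else e m.

Fixpoint teval (L : signature) (M : Lstructure L) (e : nat -> M) (t : term L) : M :=
  match t with
  | tvar n => e n
  | tzero => gzero M
  | tadd a b => gadd (teval e a) (teval e b)
  | topp a => gopp (teval e a)
  | tapp f args => @fint L M f (fun i => teval e (args i))
  end.

Fixpoint sat (L : signature) (M : Lstructure L) (e : nat -> M) (p : formula L) : Prop :=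
  match p with
  | fbot => False
  | feq a b => teval e a = teval e b
  | flt a b => glt (teval e a) (teval e b)
  | frel r args => @rint L M r (fun i => teval e (args i))
  | fnot q => ~ sat e q
  | fand q r => sat e q /\ sat e r
  | f_or q r => sat e q \/ sat e r
  | fimp q r => sat e q -> sat e r
  | fall n q => forall x : M, sat (upd e n x) q
  | fex n q => exists x : M, sat (upd e n x) q
  end.

(* M |= DCI_phi, where v is (the index of) the distinguished variable of phi and
   the parameters w are all remaining variables (quantified via the environment e). *)
Definition DCI_holds (L : signature) (M : Lstructure L) (phi : formula L) (v : nat) : Prop :=
  forall e : nat -> M,
    let P := fun x : M => sat (upd e v x) phi in
    ((exists s : M, forall x : M, glt x s -> P x) /\
     (forall x : M, (forall s : M, glt s x -> P s) ->
        exists u : M, glt x u /\ forall s : M, glt s u -> P s)) ->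
    forall x : M, P x.

Definition satisfies_DCI (L : signature) (M : Lstructure L) : Prop :=
  forall (phi : formula L) (v : nat), DCI_holds M phi v.

(* Fix g and n >= 1 and let P x := n x < g.  Multiplication by n is strictly increasing, so P is a
   down-set containing an initial segment of G (everything below min(g, 0)).  If every s < x satisfies P, then n x <> g when g
   has no n-th part, and density makes both n x < g and n x > g open conditions: the first gives
   room above x, the second contradicts P just below x.  DCI then makes P hold everywhere, which
   fails at any x >= max(g, 0). *)
From Stdlib Require Import Classical.
From mathcomp Require Import all_boot.

Set Implicit Arguments.
Unset Strict Implicit.
Unset Printing Implicit Defensive.

(* DCI_holds M phi v e is, up to conversion, DCI_pred applied to the set defined by phi. *)
Definition DCI_pred (G : DOAG) (P : G -> Prop) : Prop :=
  (exists s, forall x, glt x s -> P x) /\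
  (forall x, (forall s, glt s x -> P s) -> exists u, glt x u /\ forall s, glt s u -> P s) ->
  forall x, P x.

Lemma DCI_pred_ext (G : DOAG) (P Q : G -> Prop) :
  (forall x, P x <-> Q x) -> DCI_pred P -> DCI_pred Q.
Proof.
move=> PQ dciP [[s Qs] Qstep] x; apply/PQ/dciP; split.
  by exists s => y /Qs /PQ.
move=> y Py; have [u [yu Qu]] := Qstep y (fun z zy => proj1 (PQ z) (Py z zy)).
by exists u; split => // z /Qu /PQ.
Qed.

Section OrderedGroup.
Variable G : DOAG.
Local Notation "0" := (gzero G).
Local Notation "x + y" := (gadd x y).
Local Notation "- x" := (gopp x).
Local Notation "x < y" := (glt x y).
Definition gle (x y : G) := x < y \/ x = y.
Local Notation "x <= y" := (gle x y).
Local Notation "x *+ n" := (gnmul n x) (at level 40, left associativity).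

Lemma addr0 (x : G) : x + 0 = x.
Proof. by rewrite gaddC gadd0. Qed.

Lemma addrN (x : G) : x + - x = 0.
Proof. by rewrite gaddC gaddN. Qed.

Lemma addNK (x y : G) : (x + - y) + y = x.
Proof. by rewrite -gaddA gaddN addr0. Qed.

Lemma addKN (x y : G) : y + (x + - y) = x.
Proof. by rewrite gaddC addNK. Qed.

Lemma lt_add2l (z x y : G) : x < y -> z + x < z + y.
Proof. by rewrite !(gaddC z); apply: glt_add. Qed.

Lemma lt_add (a b c d : G) : a < b -> c < d -> a + c < b + d.
Proof. by move=> ab cd; apply: (glt_trans (glt_add c ab)); apply: lt_add2l. Qed.

Lemma lt_add2r_cancel (x y z : G) : x + z < y + z -> x < y.
Proof. by move/(glt_add (- z)); rewrite -!gaddA addrN !addr0. Qed.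

Lemma subr_gt0 (x y : G) : x < y -> 0 < y + - x.
Proof. by move/(glt_add (- x)); rewrite addrN. Qed.

Lemma oppr_lt0 (x : G) : 0 < x -> - x < 0.
Proof. by move/(glt_add (- x)); rewrite gadd0 addrN. Qed.

Lemma lt_asym (x y : G) : x < y -> y < x -> False.
Proof. by move=> xy yx; apply: (glt_irr (glt_trans xy yx)). Qed.

Lemma lt_le_trans (x y z : G) : x < y -> y <= z -> x < z.
Proof. by move=> xy [yz | <-] //; apply: glt_trans yz. Qed.

Lemma le_lt_trans (x y z : G) : x <= y -> y < z -> x < z.
Proof. by move=> [xy | ->] yz //; apply: glt_trans yz. Qed.

Lemma le_lt_asym (x y : G) : x <= y -> y < x -> False.
Proof. by move=> xy /(le_lt_trans xy); apply: glt_irr. Qed.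

Lemma le_add (a b c d : G) : a <= b -> c <= d -> a + c <= b + d.
Proof.
move=> [ab | <-] [cd | <-]; [left; exact: lt_add | left; exact: glt_add |
  left; exact: lt_add2l | by right].
Qed.

Lemma exists_lb2 (x y : G) : exists s, s <= x /\ s <= y.
Proof.
by case: (glt_total x y) => [xy | [<- | yx]]; [exists x | exists x | exists y];
  split; (right + left).
Qed.

Lemma exists_ub2 (x y : G) : exists t, x <= t /\ y <= t.
Proof.
by case: (glt_total x y) => [xy | [<- | yx]]; [exists y | exists x | exists x];
  split; (right + left).
Qed.

Lemma exists_pos_lb2 (x y : G) :
  0 < x -> 0 < y -> exists z, 0 < z /\ z < x /\ z < y.
Proof.
move=> x_gt0 y_gt0.
have [m [m_gt0 [mx my]]] : exists m, 0 < m /\ m <= x /\ m <= y.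
  by case: (glt_total x y) => [xy | [xy | yx]]; [exists x | exists x | exists y];
    do !split => //; (right + left).
have [z [z_gt0 zm]] := glt_dense m_gt0.
by exists z; do !split => //; apply: lt_le_trans zm _.
Qed.

Lemma half_lt (d : G) : 0 < d -> exists a, 0 < a /\ a + a < d.
Proof.
move=> d_gt0; have [b [b_gt0 bd]] := glt_dense d_gt0.
have [a [a_gt0 [ab adb]]] := exists_pos_lb2 b_gt0 (subr_gt0 bd).
by exists a; split => //; rewrite -(addKN d b); apply: lt_add.
Qed.

Lemma nmul0 n : 0 *+ n = 0.
Proof. by elim: n => //= n ->; rewrite gadd0. Qed.

Lemma nmulD n (x y : G) : (x + y) *+ n = x *+ n + y *+ n.
Proof.
elim: n => [|n IH] /=; first by rewrite gadd0.
by rewrite IH -!gaddA; congr (x + _); rewrite !gaddA (gaddC y).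
Qed.

Lemma nmulS_lt n (x y : G) : x < y -> x *+ n.+1 < y *+ n.+1.
Proof. by move=> xy; elim: n => [|n IH] /=; [rewrite !addr0 | apply: lt_add]. Qed.

Lemma nmul_le n (x y : G) : x <= y -> x *+ n <= y *+ n.
Proof. by move=> xy; elim: n => [|n IH] /=; [right | apply: le_add]. Qed.

Lemma nmulS_ge_self n (x : G) : 0 <= x -> x <= x *+ n.+1.
Proof.
move=> /(nmul_le n); rewrite nmul0 => h; rewrite /= -[X in X <= _](addr0 x).
by apply: le_add => //; right.
Qed.

Lemma nmulS_le_self n (x : G) : x <= 0 -> x *+ n.+1 <= x.
Proof.
move=> /(nmul_le n); rewrite nmul0 => h; rewrite /= -[X in _ <= X](addr0 x).
by apply: le_add => //; right.
Qed.

Lemma nmulS_small n (d : G) : 0 < d -> exists e, 0 < e /\ e *+ n.+1 < d.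
Proof.
elim: n d => [|n IH] d d_gt0.
  by have [e [e_gt0 ed]] := glt_dense d_gt0; exists e; rewrite /= addr0.
have [a [a_gt0 aad]] := half_lt d_gt0; have [e [e_gt0 ena]] := IH a a_gt0.
have ea : e < a := le_lt_trans (nmulS_ge_self n (or_introl e_gt0)) ena.
by exists e; split => //; apply: glt_trans aad; apply: lt_add.
Qed.

Lemma nmulS_lt_open n (x g : G) :
  x *+ n.+1 < g -> exists u, x < u /\ u *+ n.+1 < g.
Proof.
move=> /subr_gt0 /(nmulS_small n) [e [e_gt0 ed]].
exists (x + e); split; first by rewrite -[X in X < _](addr0 x); apply: lt_add2l.
by rewrite nmulD -(addKN g (x *+ n.+1)); apply: lt_add2l.
Qed.

Lemma nmulS_gt_open n (x g : G) :
  g < x *+ n.+1 -> exists s, s < x /\ g < s *+ n.+1.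
Proof.
move=> /subr_gt0 /(nmulS_small n) [e [e_gt0 ed]].
exists (x + - e); split.
  by rewrite -[X in _ < X](addr0 x); apply/lt_add2l/oppr_lt0.
apply: (@lt_add2r_cancel _ _ (e *+ n.+1)); rewrite -nmulD addNK gaddC.
by rewrite -[X in _ < X](addNK (x *+ n.+1) g); apply: glt_add.
Qed.

Lemma nmulS_surj_of_DCI n (g : G) :
  DCI_pred (fun x => x *+ n.+1 < g) -> exists h, h *+ n.+1 = g.
Proof.
move=> dci; apply: NNPP => no_root.
have [s [s_le0 s_leg]] := exists_lb2 0 g.
have [t [t_ge0 t_geg]] := exists_ub2 0 g.
suff tn_lt_g : t *+ n.+1 < g.
  exact: le_lt_asym t_geg (le_lt_trans (nmulS_ge_self n t_ge0) tn_lt_g).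
apply: dci; split.
  exists s => x xs; have x_le0 : x <= 0 by left; apply: lt_le_trans s_le0.
  by apply: le_lt_trans (nmulS_le_self n x_le0) (lt_le_trans xs s_leg).
move=> x below_x; case: (glt_total (x *+ n.+1) g) => [lt | [eq | gt]].
- have [u [xu ug]] := nmulS_lt_open lt.
  by exists u; split => // y yu; apply: glt_trans (nmulS_lt n yu) ug.
- by case: no_root; exists x.
- have [y [yx gy]] := nmulS_gt_open gt.
  by case: (lt_asym gy (below_x y yx)).
Qed.

End OrderedGroup.

Fixpoint tmul (L : signature) (k : nat) (t : term L) : term L :=
  match k with 0 => tzero L | S k => tadd t (tmul k t) end.

Lemma teval_tmul (L : signature) (M : Lstructure L) (e : nat -> M) k (t : term L) :
  teval e (tmul k t) = gnmul k (teval e t).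
Proof. by elim: k => //= k ->. Qed.

Lemma DCI_nmul_lt (L : signature) (M : Lstructure L) n (g : M) :
  satisfies_DCI M -> DCI_pred (fun x : M => glt (gnmul n x) g).
Proof.
move=> dci; have := dci (flt (tmul n (tvar L 0)) (tvar L 1)) 0 (fun=> g).
by apply: DCI_pred_ext => x; rewrite /= teval_tmul.
Qed.

Theorem corollary3p3 (L : signature) (M : Lstructure L) :
  satisfies_DCI M -> divisible (grp M).
Proof.
move=> dci g [/leP // | n] _.
exact/nmulS_surj_of_DCI/DCI_nmul_lt.
Qed.
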